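(* Let $c\in(0,1)$ and let $(G,\phi)$ be a (random) locally finite connected rooted undirected graph with degrees $(d_j)_{j\in V}$, and let $R_\phi$ be its root-PageRank with damping factor $c$. For $\alpha>0$ let $d_\phi^{(\ge\alpha)}=\#\{j\in V: j\sim\phi,\ d_j\ge\alpha\}$. Assume there exist $\alpha>0$ and $\varepsilon\in(0,1)$ such that, as $k\to\infty$, $$\mathbb{P}\big(d_\phi>k,\ d_\phi^{(\ge\alpha)}\ge(1-\varepsilon)d_\phi\big)=o\big(\mathbb{P}(d_\phi>k)\big).$$ Then $$\mathbb{P}(R_\phi>k)\ge(1+o(1))\,\mathbb{P}\Big(d_\phi>\frac{\alpha k}{\varepsilon c(1-c)}\Big)\qquad\text{as }k\to\infty.$$
   Context: A rooted graph is a pair $(G,\phi)$ with $G=(V,E)$ a graph and $\phi\in V$; it is locally finite if every vertex has finite degree; random rooted graphs are random elements of the space of locally finite connected rooted graphs up to root-preserving isomorphism. With $\boldsymbol{A}=(a_{ij})$ the adjacency matrix and $\boldsymbol{P}=(p_{ij})$, $p_{ij}=a_{ij}/d_i$ (a possibly infinite matrix), the root-PageRank is $R_\phi=(1-c)\sum_{s=0}^\infty c^s\sum_{j\in V}(\boldsymbol{P}^s)_{j\phi}$. $j\sim\phi$ means $j$ and $\phi$ are adjacent. $f=o(g)$ as $k\to\infty$ means $\limsup_{k\to\infty}|f(k)/g(k)|=0$. *)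

From HB Require Import structures.
From mathcomp Require Import all_boot all_order all_algebra.
From mathcomp Require Import finmap.
From mathcomp Require Import all_classical all_reals all_analysis.
Set Implicit Arguments. Unset Strict Implicit. Unset Printing Implicit Defensive.
Import Order.TTheory GRing.Theory Num.Theory.
Import numFieldNormedType.Exports.
Local Open Scope classical_set_scope.
Local Open Scope ring_scope.

(* A (labelled representative of a) rooted graph: vertex set [vs : set nat],
   adjacency relation [adj], root [phi]. *)
Section Graph.
Variable R : realType.
Variables (vs : set nat) (adj : nat -> nat -> bool).

Definition nbrs (i : nat) : set nat := [set j | adj i j].

Definition deg (i : nat) : nat := (#|` fset_set (nbrs i)|)%fset.

Definition deg_ge (alpha : R) (i : nat) : nat :=
  (#|` fset_set [set j | adj i j /\ alpha <= (deg j)%:R]|)%fset.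

Definition simple_graph : Prop :=
  [/\ forall i j, adj i j = adj j i,
      forall i, ~~ adj i i &
      forall i j, adj i j -> vs i /\ vs j].

Definition locally_finite : Prop := forall i, vs i -> finite_set (nbrs i).

Definition connected_graph : Prop :=
  forall i j, vs i -> vs j -> exists s : seq nat, path adj i s /\ last i s = j.

Definition lfc_rooted_graph (phi : nat) : Prop :=
  [/\ simple_graph, locally_finite, connected_graph & vs phi].

Definition pmat (i j : nat) : R := if adj i j then ((deg i)%:R)^-1 else 0.

Fixpoint Ppow (s : nat) (i j : nat) : \bar R :=
  match s with
  | 0%N => ((i == j)%:R)%:E
  | s'.+1 => \esum_(k in vs) (Ppow s' i k * (pmat k j)%:E)%E
  end.

Definition pagerank (c : R) (phi : nat) : \bar R :=
  ((1 - c)%:E * \esum_(s in [set: nat]) ((c ^+ s)%:E * \esum_(j in vs) Ppow s j phi))%E.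
End Graph.

Definition littleo_infty (R : realType) (f g : R -> R) : Prop :=
  forall eta : R, 0 < eta -> \forall k \near +oo, `|f k| <= eta * `|g k|.

From HB Require Import structures.
From mathcomp Require Import all_boot all_order all_algebra finmap.
From mathcomp Require Import all_classical all_reals all_analysis.
From mathcomp Require Import measurable_realfun.
From mathcomp Require Import ring lra.
Import Order.TTheory GRing.Theory Num.Theory.
Import numFieldNormedType.Exports.
Local Open Scope classical_set_scope.
Local Open Scope ring_scope.

(* PageRank dominates its one-step term:
   R_phi >= (1-c) c sum_{j ~ phi} 1/d_j >= (1-c) c / alpha * #{j ~ phi : d_j < alpha}.
   If d_phi > x := alpha k / (eps c (1-c)) while fewer than (1-eps) d_phi neighbours
   have degree >= alpha, then more than eps x neighbours have degree < alpha, so R_phi > k.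
   Hence {d_phi > x} is covered by {R_phi > k} and the event of the hypothesis, whose
   probability is o(P(d_phi > x)). *)

Lemma esum_cst (R : realType) (I : choiceType) (A : set I) (r : R) :
  finite_set A -> 0 <= r ->
  (\esum_(i in A) r%:E = (r * (#|` fset_set A|)%fset%:R)%:E)%E.
Proof.
move=> fA r0; rewrite esum_fset// fsbig_finite//= sumEFin card_fset_sum1.
by rewrite natr_sum mulr_sumr; congr (_%:E); apply: eq_bigr => i _; rewrite mulr1.
Qed.

Section PageRankLowerBound.
Context {R : realType} {vs : set nat} {adj : nat -> nat -> bool}.
Hypotheses (adj_simple : simple_graph vs adj) (vs_lf : locally_finite vs adj).

Lemma nbrs_finite i : finite_set (nbrs adj i).
Proof.
case: adj_simple => _ _ adj_vs; have [/vs_lf//|vs_i] := pselect (vs i).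
suff -> : nbrs adj i = set0 by exact: finite_set0.
by apply/seteqP; split => j // /adj_vs[].
Qed.

Lemma deg_gt0 i j : adj i j -> (0 < deg adj i)%N.
Proof.
move=> adj_ij; rewrite /deg cardfs_gt0; apply/fset0Pn; exists j.
by rewrite in_fset_set ?inE; [exact: adj_ij | exact: nbrs_finite].
Qed.

Lemma pmat_ge0 i j : 0 <= pmat R adj i j.
Proof. by rewrite /pmat; case: ifP => // _; rewrite invr_ge0. Qed.

Lemma Ppow_ge0 s i j : (0 <= Ppow R vs adj s i j)%E.
Proof.
elim: s i j => [|s IH] i j /=; first by rewrite lee_fin.
by apply: esum_ge0 => k _; rewrite mule_ge0 ?lee_fin ?pmat_ge0.
Qed.

Lemma pmat_le_Ppow1 i j : vs i -> ((pmat R adj i j)%:E <= Ppow R vs adj 1 i j)%E.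
Proof.
move=> vs_i /=; apply: esum_ge; exists [set i]; last by rewrite fsbig_set1 eqxx mul1e.
by split; [exact: finite_set1 | move=> k /= ->].
Qed.

Lemma Ppow1_le_pagerank (c : R) phi : 0 < c < 1 ->
  (((1 - c) * c)%:E * (\esum_(j in vs) Ppow R vs adj 1 j phi) <= pagerank vs adj c phi)%E.
Proof.
case/andP => _ c_lt1; rewrite /pagerank EFinM -muleA.
apply: lee_wpmul2l; first by rewrite lee_fin subr_ge0 ltW.
apply: esum_ge; exists [set 1%N]; last by rewrite fsbig_set1 expr1.
by split; [exact: finite_set1 | exact: subsetT].
Qed.

Definition low_nbrs (alpha : R) phi := [set j | adj phi j /\ (deg adj j)%:R < alpha].

Lemma card_low_nbrs alpha phi :
  (#|` fset_set (low_nbrs alpha phi)|)%fset%:R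
    = (deg adj phi)%:R - (deg_ge adj alpha phi)%:R :> R.
Proof.
set high := [set j | alpha <= (deg adj j)%:R].
have fin_nbrs := nbrs_finite phi.
have fin_high : finite_set (nbrs adj phi `&` high) by apply: sub_finite_set fin_nbrs.
have fin_low : finite_set (nbrs adj phi `&` ~` high) by apply: sub_finite_set fin_nbrs.
have -> : low_nbrs alpha phi = nbrs adj phi `&` ~` high.
  by apply/seteqP; split => j; rewrite /low_nbrs /high /= ltNge => -[? /negP].
have := @esumID R _ high (nbrs adj phi) (fun _ => 1%:E) (fun _ _ => lee01).
by rewrite !esum_cst// -EFinD !mul1r => -[->]; rewrite addrAC subrr add0r.
Qed.

Lemma pagerank_ge_low_nbrs (c alpha : R) phi : 0 < c < 1 -> 0 < alpha ->
  (((1 - c) * c / alpha * ((deg adj phi)%:R - (deg_ge adj alpha phi)%:R))%:E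
    <= pagerank vs adj c phi)%E.
Proof.
move=> c01 alpha_gt0; case/andP: (c01) => c_gt0 c_lt1.
case: (adj_simple) => sym _ adj_vs.
apply: le_trans _ (Ppow1_le_pagerank c phi c01).
rewrite -card_low_nbrs -mulrA EFinM.
apply: lee_wpmul2l; first by rewrite lee_fin mulr_ge0 ?subr_ge0 ?ltW.
have low_vs : low_nbrs alpha phi `<=` vs by move=> j [/adj_vs[]].
apply: (@le_trans _ _ (\esum_(j in low_nbrs alpha phi) (pmat R adj j phi)%:E)); last first.
  rewrite -(setIidr low_vs) esum_mkcondr; apply: le_esum => j vs_j.
  by case: ifP => _; [exact: pmat_le_Ppow1 | exact: Ppow_ge0].
have fin_low : finite_set (low_nbrs alpha phi).
  by apply: sub_finite_set (nbrs_finite phi) => j [].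
rewrite -esum_cst ?invr_ge0 ?(ltW alpha_gt0)//.
apply: le_esum => j [adj_j deg_lt]; rewrite lee_fin /pmat sym adj_j.
have deg_gt0 : (0 < deg adj j)%N by apply: (@deg_gt0 j phi); rewrite sym.
by rewrite lef_pV2 ?posrE ?ltr0n// (ltW deg_lt).
Qed.

Lemma pagerank_gt_few_high_nbrs (c alpha eps x : R) phi :
  0 < c < 1 -> 0 < alpha -> 0 < eps -> x < (deg adj phi)%:R ->
  (deg_ge adj alpha phi)%:R < (1 - eps) * (deg adj phi)%:R ->
  (((1 - c) * c * eps / alpha * x)%:E < pagerank vs adj c phi)%E.
Proof.
move=> c01 alpha_gt0 eps_gt0 x_lt few_high; case/andP: (c01) => c_gt0 c_lt1.
apply: lt_le_trans (pagerank_ge_low_nbrs c alpha phi c01 alpha_gt0).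
have slope_gt0 : 0 < (1 - c) * c / alpha by rewrite divr_gt0 // mulr_gt0 // subr_gt0.
have many_low : eps * x < (deg adj phi)%:R - (deg_ge adj alpha phi)%:R.
  have : eps * x < eps * (deg adj phi)%:R by rewrite ltr_pM2l.
  lra.
have -> : (1 - c) * c * eps / alpha * x = (1 - c) * c / alpha * (eps * x) by ring.
by rewrite lte_fin ltr_pM2l.
Qed.

End PageRankLowerBound.

Section NatValuedMeasurability.
Context {d : measure_display} {T : measurableType d} {R : realType}.
Implicit Types f g : T -> nat.

Lemma measurable_nat_preimage f (Q : nat -> Prop) :
  (forall n, measurable [set w | f w = n]) -> measurable [set w | Q (f w)].
Proof.
move=> mf; suff -> : [set w | Q (f w)] = \bigcup_(n in Q) [set w | f w = n].
  exact: bigcup_measurable.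
by apply/seteqP; split => [w Qw|w [n Qn /= ->//]]; exists (f w).
Qed.

Lemma measurable_nat_preimage2 f g (Q : nat -> nat -> Prop) :
  (forall n, measurable [set w | f w = n]) -> (forall n, measurable [set w | g w = n]) ->
  measurable [set w | Q (f w) (g w)].
Proof.
move=> mf mg.
suff -> : [set w | Q (f w) (g w)] = \bigcup_n ([set w | f w = n] `&` [set w | Q n (g w)]).
  apply: bigcupT_measurable => n; apply: measurableI => //.
  exact: (measurable_nat_preimage g (Q n) mg).
by apply/seteqP; split => [w Qw|w [n _ [/= <-//]]]; exists (f w).
Qed.

Lemma measurable_fun_nat_comp {d'} {U : measurableType d'} f (h : nat -> U) :
  (forall n, measurable [set w | f w = n]) -> measurable_fun setT (h \o f).
Proof.
by move=> mf _ B _; rewrite setTI; exact: (measurable_nat_preimage f (fun n => B (h n)) mf).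
Qed.

Lemma measurable_nat_fibres f :
  measurable_fun setT (fun w => ((f w)%:R)%:E : \bar R) ->
  forall n, measurable [set w | f w = n].
Proof.
move=> mf n; have := mf measurableT [set (n%:R)%:E] (emeasurable_set1 _).
rewrite setTI; congr measurable; apply/seteqP; split => w /=.
  by move=> [/eqP]; rewrite eqr_nat => /eqP.
by move=> ->.
Qed.

Lemma measurable_fun_nat_eval {d'} {U : measurableType d'} (F : T -> nat -> U) f :
  (forall n, measurable_fun setT (F^~ n)) -> (forall n, measurable [set w | f w = n]) ->
  measurable_fun setT (fun w => F w (f w)).
Proof.
move=> mF mf _ B mB; rewrite setTI.
suff -> : (fun w => F w (f w)) @^-1` B = \bigcup_n ([set w | f w = n] `&` (F^~ n @^-1` B)).
  apply: bigcupT_measurable => n; apply: measurableI => //.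
  by have := mF n measurableT B mB; rewrite setTI.
by apply/seteqP; split => [w Bw|w [n _ [/= <-//]]]; exists (f w).
Qed.

Lemma measurable_fun_esum (X : T -> nat -> \bar R) (S : T -> set nat) :
  (forall w k, (0 <= X w k)%E) -> (forall k, measurable_fun setT (X^~ k)) ->
  (forall k, measurable [set w | S w k]) ->
  measurable_fun setT (fun w => \esum_(k in S w) X w k).
Proof.
move=> X_ge0 mX mS.
have -> : (fun w => \esum_(k in S w) X w k) =
    (fun w => \sum_(k <oo | k \in xpredT) (if k \in S w then X w k else 0))%E.
  by apply/funext => w; rewrite esum_mkcond -nneseries_esumT// => k; case: ifP.
apply: ge0_emeasurable_sum => [k w _ _|k _]; first by case: ifP.
apply: measurable_fun_ifT => //; apply: (measurable_fun_bool true).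
by rewrite setTI (_ : _ @^-1` _ = [set w | S w k])//; apply/seteqP; split => w /=;
  [exact: set_mem | exact: mem_set].
Qed.

Lemma measurable_fun_card (Q : T -> nat -> bool) :
  (forall k, measurable [set w | Q w k]) -> (forall w, finite_set [set k | Q w k]) ->
  measurable_fun setT (fun w => ((#|` fset_set [set k | Q w k]|)%fset%:R)%:E : \bar R).
Proof.
move=> mQ fQ.
have -> : (fun w => ((#|` fset_set [set k | Q w k]|)%fset%:R)%:E : \bar R) =
    (fun w => \esum_(k in [set k | Q w k]) 1%:E).
  by apply/funext => w; rewrite esum_cst// mul1r.
by apply: measurable_fun_esum => // k; exact: measurable_cst.
Qed.

End NatValuedMeasurability.

Section RandomRootedGraph.
Context {R : realType} {d : measure_display} {T : measurableType d}.
Context {vs : T -> set nat} {adj : T -> nat -> nat -> bool} {root : T -> nat}.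
Hypotheses (vs_meas : forall i, measurable [set w | vs w i])
  (adj_meas : forall i j, measurable [set w | adj w i j])
  (root_meas : forall i, measurable [set w | root w = i])
  (graph_lfc : forall w, lfc_rooted_graph (vs w) (adj w) (root w)).

Let graph_nbrs_finite w i : finite_set (nbrs (adj w) i).
Proof. by case: (graph_lfc w) => simple lf _ _; exact: (nbrs_finite simple lf). Qed.

Lemma measurable_fun_deg i :
  measurable_fun setT (fun w => ((deg (adj w) i)%:R)%:E : \bar R).
Proof.
by apply: measurable_fun_card => [j|w]; [exact: adj_meas | exact: graph_nbrs_finite].
Qed.

Lemma measurable_deg_eq i m : measurable [set w | deg (adj w) i = m].
Proof. exact: measurable_nat_fibres (measurable_fun_deg i) m. Qed.

Lemma measurable_fun_deg_ge (alpha : R) i :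
  measurable_fun setT (fun w => ((deg_ge (adj w) alpha i)%:R)%:E : \bar R).
Proof.
have deg_geE w : deg_ge (adj w) alpha i =
    #|` fset_set [set j | adj w i j && (alpha <= (deg (adj w) j)%:R)]|%fset.
  rewrite /deg_ge; congr (#|` fset_set _|)%fset.
  by apply/seteqP; split => j /=; [case=> -> -> | case/andP=> -> ->].
under eq_fun do rewrite deg_geE.
apply: measurable_fun_card => [j|w].
  rewrite (_ : [set w | _] = [set w | adj w i j] `&` [set w | alpha <= (deg (adj w) j)%:R]).
    apply: measurableI; first exact: adj_meas.
    exact: (measurable_nat_preimage _ (fun m => alpha <= m%:R) (measurable_deg_eq j)).
  by apply/seteqP; split => w /=; [case/andP | case=> -> ->].
by apply: sub_finite_set (graph_nbrs_finite w i) => j /andP[].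
Qed.

Lemma measurable_root_deg (alpha : R) (Q : nat -> nat -> Prop) :
  measurable [set w | Q (deg (adj w) (root w)) (deg_ge (adj w) alpha (root w))].
Proof.
have root_fibres F : (forall n, measurable_fun setT (fun w => ((F w n)%:R)%:E : \bar R)) ->
    forall m, measurable [set w | F w (root w) = m].
  move=> mF; apply: measurable_nat_fibres.
  exact: (measurable_fun_nat_eval (fun w n => ((F w n)%:R)%:E) _ mF root_meas).
apply: (measurable_nat_preimage2 _ _ Q).
  exact: (root_fibres (fun w => deg (adj w)) measurable_fun_deg).
exact: (root_fibres (fun w => deg_ge (adj w) alpha) (measurable_fun_deg_ge alpha)).
Qed.

Lemma measurable_fun_pmat i j : measurable_fun setT (fun w => (pmat R (adj w) i j)%:E).
Proof.
have -> : (fun w => (pmat R (adj w) i j)%:E) =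
    (fun w => if adj w i j then (((deg (adj w) i)%:R)^-1)%:E else 0%E).
  by apply/funext => w; rewrite /pmat; case: ifP.
apply: measurable_fun_ifT => //.
  by apply: (measurable_fun_bool true); rewrite setTI; exact: adj_meas.
exact: (measurable_fun_nat_comp _ (fun m => ((m%:R)^-1)%:E) (measurable_deg_eq i)).
Qed.

Lemma measurable_fun_Ppow s i j : measurable_fun setT (fun w => Ppow R (vs w) (adj w) s i j).
Proof.
elim: s i j => [//|s IH] i j /=.
apply: measurable_fun_esum => // [w k|k].
  by rewrite mule_ge0 ?Ppow_ge0 ?lee_fin ?pmat_ge0.
by apply: emeasurable_funM; [exact: IH | exact: measurable_fun_pmat].
Qed.

Lemma measurable_fun_pagerank (c : R) i : 0 <= c ->
  measurable_fun setT (fun w => pagerank (vs w) (adj w) c i).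
Proof.
move=> c_ge0; apply: emeasurable_funM => //.
apply: (measurable_fun_esum _ (fun _ => setT)) => [w s|s|s]; last exact: measurableT.
  by rewrite mule_ge0 ?lee_fin ?exprn_ge0 ?esum_ge0// => j _; exact: Ppow_ge0.
apply: emeasurable_funM => //; apply: measurable_fun_esum => // [w j|j].
  exact: Ppow_ge0.
exact: measurable_fun_Ppow.
Qed.

Lemma measurable_root_pagerank_gt (c k : R) : 0 <= c ->
  measurable [set w | k%:E < pagerank (vs w) (adj w) c (root w)]%E.
Proof.
move=> c_ge0; rewrite -[X in measurable X]setTI.
apply: emeasurable_fun_o_infty => //.
apply: (measurable_fun_nat_eval (fun w i => pagerank (vs w) (adj w) c i)) => // i.
exact: measurable_fun_pagerank.
Qed.

End RandomRootedGraph.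

Lemma measure_cover_ratio_le d (T : measurableType d) (R : realType)
    (mu : {finite_measure set T -> \bar R}) (A B C : set T) :
  measurable A -> measurable B -> measurable C -> A `<=` C `|` B ->
  ((1 - fine (mu B) / fine (mu A))%:E * mu A <= mu C)%E.
Proof.
move=> mA mB mC sub_ACB.
have le_ACB : (mu A <= mu C + mu B)%E.
  apply: le_trans (measureU2 mu mC mB).
  by apply: le_measure => //; rewrite inE//; exact: measurableU.
have fineK_mu X : measurable X -> mu X = (fine (mu X))%:E.
  by move=> mX; rewrite fineK// fin_num_measure.
move: le_ACB; rewrite (fineK_mu A)// (fineK_mu B)// (fineK_mu C)// -EFinD -EFinM !lee_fin.
have [->|muA_neq0] := eqVneq (fine (mu A)) 0.
  by rewrite mulr0 fine_ge0// measure_ge0.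
by rewrite mulrBl mul1r divfK//; lra.
Qed.

Lemma littleo_infty_ratio_cvg0 {R : realType} (f g : R -> R) :
  littleo_infty f g -> f x / g x @[x --> +oo] --> 0.
Proof.
move=> fg; apply/cvgrPdist_le => e e_gt0; apply: filterS (fg e e_gt0) => x fx_le.
rewrite sub0r normrN normrM normfV.
(* where g vanishes the ratio is f x / 0 = 0 *)
have [->|gx_neq0] := eqVneq (g x) 0; first by rewrite normr0 invr0 mulr0 ltW.
by rewrite ler_pdivrMr ?normr_gt0.
Qed.

Lemma cvgry_pscale {R : realType} (a b : R) : 0 < a -> 0 < b ->
  a * x / b @[x --> +oo] --> +oo.
Proof.
move=> a_gt0 b_gt0; apply/cvgryPge => A; near=> x.
rewrite ler_pdivlMr// -ler_pdivrMl//; near: x; exact: nbhs_pinfty_ge (num_real _).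
Unshelve. all: end_near. Qed.

Theorem mainTheorem4 (R : realType) (d : measure_display) (T : measurableType d)
  (P : probability T R)
  (vs : T -> set nat) (adj : T -> nat -> nat -> bool) (root : T -> nat)
  (Hmvs : forall i, measurable [set w | vs w i])
  (Hmadj : forall i j, measurable [set w | adj w i j])
  (Hmroot : forall i, measurable [set w | root w = i])
  (Hgraph : forall w, lfc_rooted_graph (vs w) (adj w) (root w))
  (c : R) (hc : 0 < c < 1) (alpha eps : R) (halpha : 0 < alpha) (heps : 0 < eps < 1)
  (Hyp : littleo_infty
     (fun k => fine (P [set w | k < (deg (adj w) (root w))%:R /\
                       (1 - eps) * (deg (adj w) (root w))%:R
                         <= (deg_ge (adj w) alpha (root w))%:R]))
     (fun k => fine (P [set w | k < (deg (adj w) (root w))%:R]))) :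
  exists h : R -> R, h x @[x --> +oo] --> 0 /\
    \forall k \near +oo,
      ((1 + h k)%:E * P [set w | (alpha * k / (eps * c * (1 - c)) < (deg (adj w) (root w))%:R)%R]
        <= P [set w | k%:E < pagerank (vs w) (adj w) c (root w)])%E.
Proof.
case/andP: (hc) => c_gt0 c_lt1; case/andP: heps => eps_gt0 _.
have scale_gt0 : 0 < eps * c * (1 - c) by rewrite !mulr_gt0// subr_gt0.
set x := fun k => alpha * k / (eps * c * (1 - c)).
(* h k := - P(B_(x k)) / P(d_phi > x k), with B_y the event of the hypothesis *)
eexists; split.
  rewrite -oppr0; apply: cvgN.
  exact: cvg_comp _ _ (cvgry_pscale _ _ halpha scale_gt0) (littleo_infty_ratio_cvg0 _ _ Hyp).
apply: nearW => k; apply: measure_cover_ratio_le.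
- exact: (measurable_root_deg Hmadj Hmroot Hgraph alpha (fun m _ => x k < m%:R)).
- exact: (measurable_root_deg Hmadj Hmroot Hgraph alpha
    (fun m m' => x k < m%:R /\ (1 - eps) * m%:R <= m'%:R)).
- exact: (measurable_root_pagerank_gt Hmvs Hmadj Hmroot Hgraph _ _ (ltW c_gt0)).
move=> w deg_gt; have [|few_high] := leP ((1 - eps) * (deg (adj w) (root w))%:R)
  (deg_ge (adj w) alpha (root w))%:R; first by right.
left; case: (Hgraph w) => simple lf _ _.
have := pagerank_gt_few_high_nbrs simple lf c alpha eps (x k) (root w) hc halpha eps_gt0
  deg_gt few_high.
suff -> : (1 - c) * c * eps / alpha * x k = k by [].
by rewrite /x; field; rewrite !lt0r_neq0 ?subr_gt0.
Qed.
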